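(* For every finite point set $P$ in general position, the graph $G_\bigtriangledown(P)\cap G_\bigtriangleup(P)$ (vertex set $P$, edge set the intersection of the edge sets) is connected.
   Context: A finite point set $P$ in the plane is in general position if no line through two points of $P$ makes an angle of $0^\circ$, $60^\circ$ or $120^\circ$ with the horizontal. A down-triangle (resp. up-triangle) is an equilateral triangle with one side parallel to the $x$-axis and the corner opposite to this side below (resp. above) that side. $G_\bigtriangledown(P)$ (resp. $G_\bigtriangleup(P)$) is the graph with vertex set $P$ in which $p,q$ are adjacent iff some (closed) down-triangle (resp. up-triangle) contains $p$ and $q$ and no other point of $P$. *)

From Stdlib Require Import Reals List Relations.
Open Scope R_scope.

Definition point : Type := (R * R)%type.

(* General position: no line through two distinct points of P makes an angle
   of 0, 60 or 120 degrees with the horizontal, i.e. the direction q - p is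
   neither horizontal nor of slope +sqrt 3 / -sqrt 3. *)
Definition general_position (P : list point) : Prop :=
  forall p q, In p P -> In q P -> p <> q ->
    snd q - snd p <> 0 /\
    snd q - snd p <> sqrt 3 * (fst q - fst p) /\
    snd q - snd p <> - sqrt 3 * (fst q - fst p).

(* Closed down-triangle with lower apex (x0,y0) and height h > 0:
   horizontal top side at y = y0 + h, the two other sides making angles of
   60 and 120 degrees with the horizontal through the apex below. *)
Definition in_down_triangle (x0 y0 h : R) (r : point) : Prop :=
  snd r <= y0 + h /\ sqrt 3 * Rabs (fst r - x0) <= snd r - y0.

(* Closed up-triangle with upper apex (x0,y0) and height h > 0. *)
Definition in_up_triangle (x0 y0 h : R) (r : point) : Prop :=
  y0 - h <= snd r /\ sqrt 3 * Rabs (fst r - x0) <= y0 - snd r.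

Definition G_down_adj (P : list point) (p q : point) : Prop :=
  In p P /\ In q P /\ p <> q /\
  exists x0 y0 h, 0 < h /\
    in_down_triangle x0 y0 h p /\ in_down_triangle x0 y0 h q /\
    forall r, In r P -> in_down_triangle x0 y0 h r -> r = p \/ r = q.

Definition G_up_adj (P : list point) (p q : point) : Prop :=
  In p P /\ In q P /\ p <> q /\
  exists x0 y0 h, 0 < h /\
    in_up_triangle x0 y0 h p /\ in_up_triangle x0 y0 h q /\
    forall r, In r P -> in_up_triangle x0 y0 h r -> r = p \/ r = q.

Definition G_cap_adj (P : list point) (p q : point) : Prop :=
  G_down_adj P p q /\ G_up_adj P p q.

Definition graph_connected (P : list point) (e : point -> point -> Prop) : Prop :=
  forall p q, In p P -> In q P -> clos_refl_trans point e p q.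

From Stdlib Require Import Reals List Relations Lra Lia Classical Wf_nat.
Open Scope R_scope.

(* In the coordinates W = y, U = y - sqrt3 x, V = y + sqrt3 x
   (so U + V = 2W), a closed down-triangle is a set {W <= a, U >= b, V >= c}.
   The smallest down-triangle containing p and q is therefore its "hull"
   {W <= max W, U >= min U, V >= min V}, whose size is
   tri_size p q = 2 max(Wp,Wq) - min(Up,Uq) - min(Vp,Vq).
   If pq is not an edge of G_down, some other point r of P lies in this hull,
   and in general position both tri_size p r and tri_size r q are strictly
   smaller than tri_size p q.  Up-triangles are the images of down-triangles
   under the point reflection a |-> -a, which preserves tri_size, so the same
   holds when pq is not an edge of G_up.  Hence any pair p, q that is not an
   edge of the intersection graph is joined through a point r by two pairs of
   smaller size, and connectivity follows by induction on the (finitely many)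
   values of tri_size on P x P, packaged as the generic lemma finite_descent. *)

Definition s : R := sqrt 3.

Lemma s_pos : 0 < s.
Proof. unfold s; apply sqrt_lt_R0; lra. Qed.

Definition W (a : point) : R := snd a.
Definition U (a : point) : R := snd a - s * fst a.
Definition V (a : point) : R := snd a + s * fst a.

Lemma UV_W (a : point) : U a + V a = 2 * W a.
Proof. unfold U, V, W; ring. Qed.

Lemma general_position_coords (P : list point) (a b : point) :
  general_position P -> In a P -> In b P -> a <> b ->
  W a <> W b /\ U a <> U b /\ V a <> V b.
Proof.
  intros G Ha Hb Hab; destruct (G a b Ha Hb Hab) as [EW [EU EV]].
  unfold W, U, V, s in *; repeat split; intro E; lra.
Qed.

Lemma down_triangle_iff (x0 y0 h : R) (r : point) :
  in_down_triangle x0 y0 h r <->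
  W r <= y0 + h /\ y0 - s * x0 <= U r /\ y0 + s * x0 <= V r.
Proof.
  unfold in_down_triangle, W, U, V; pose proof s_pos as Hs; unfold s in *.
  unfold Rabs; destruct (Rcase_abs (fst r - x0)); split;
    [intros [A B]; repeat split; nra | intros [A [B C]]; split; nra
    |intros [A B]; repeat split; nra | intros [A [B C]]; split; nra].
Qed.

Definition in_down_hull (p q r : point) : Prop :=
  W r <= Rmax (W p) (W q) /\ Rmin (U p) (U q) <= U r /\ Rmin (V p) (V q) <= V r.

Lemma in_down_hull_l (p q : point) : in_down_hull p q p.
Proof. repeat split; [apply Rmax_l | apply Rmin_l | apply Rmin_l]. Qed.

Lemma in_down_hull_r (p q : point) : in_down_hull p q q.
Proof. repeat split; [apply Rmax_r | apply Rmin_r | apply Rmin_r]. Qed.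

Lemma in_down_hull_sym (p q r : point) : in_down_hull p q r -> in_down_hull q p r.
Proof. unfold in_down_hull; rewrite Rmax_comm, (Rmin_comm (U p)), (Rmin_comm (V p)); auto. Qed.

Lemma down_hull_is_triangle (p q : point) : W p <> W q ->
  exists x0 y0 h, 0 < h /\
    forall r, in_down_triangle x0 y0 h r <-> in_down_hull p q r.
Proof.
  intros Hpq.
  pose proof (UV_W p); pose proof (UV_W q).
  pose proof (Rmax_l (W p) (W q)); pose proof (Rmax_r (W p) (W q)).
  pose proof (Rmin_l (U p) (U q)); pose proof (Rmin_r (U p) (U q)).
  pose proof (Rmin_l (V p) (V q)); pose proof (Rmin_r (V p) (V q)).
  set (A := Rmax (W p) (W q)) in *; set (B := Rmin (U p) (U q)) in *;
    set (C := Rmin (V p) (V q)) in *.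
  exists ((C - B) / (2 * s)), ((B + C) / 2), (A - (B + C) / 2).
  assert (Hx0 : s * ((C - B) / (2 * s)) = (C - B) / 2)
    by (pose proof s_pos; field; lra).
  split.
  - destruct (Rdichotomy _ _ Hpq); lra.
  - intro r; rewrite down_triangle_iff, Hx0; unfold in_down_hull; fold A B C.
    split; intros [Hw [Hu Hv]]; repeat split; lra.
Qed.

(* Size (twice the height) of the smallest down-triangle containing p and q. *)
Definition tri_size (p q : point) : R :=
  2 * Rmax (W p) (W q) - Rmin (U p) (U q) - Rmin (V p) (V q).

Lemma tri_size_sym (p q : point) : tri_size p q = tri_size q p.
Proof. unfold tri_size; rewrite Rmax_comm, (Rmin_comm (U p)), (Rmin_comm (V p)); ring. Qed.

Lemma Rmax_shrink (a x y : R) : x <= Rmax a y -> x <> y ->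
  Rmax a x <= Rmax a y /\ (Rmax a x = Rmax a y -> y <= a).
Proof. unfold Rmax; destruct (Rle_dec a x), (Rle_dec a y); intros; split; intros; lra. Qed.

Lemma Rmin_shrink (a x y : R) : Rmin a y <= x -> x <> y ->
  Rmin a y <= Rmin a x /\ (Rmin a x = Rmin a y -> a <= y).
Proof. unfold Rmin; destruct (Rle_dec a x), (Rle_dec a y); intros; split; intros; lra. Qed.

(* A third point inside the hull of p and q spans with p a strictly smaller
   triangle: equality would force q below p in W but above p in U and V,
   contradicting U + V = 2W. *)
Lemma down_hull_smaller (p q r : point) :
  W p <> W q -> W r <> W q -> U r <> U q -> V r <> V q ->
  in_down_hull p q r -> tri_size p r < tri_size p q.
Proof.
  intros Hpq HW HU HV [HWr [HUr HVr]].
  destruct (Rmax_shrink (W p) (W r) (W q) HWr HW) as [LW EW].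
  destruct (Rmin_shrink (U p) (U r) (U q) HUr HU) as [LU EU].
  destruct (Rmin_shrink (V p) (V r) (V q) HVr HV) as [LV EV].
  unfold tri_size.
  destruct (Rle_lt_or_eq_dec _ _ LW) as [|eW]; [lra|].
  destruct (Rle_lt_or_eq_dec _ _ LU) as [|eU]; [lra|].
  destruct (Rle_lt_or_eq_dec _ _ LV) as [|eV]; [lra|].
  exfalso; apply Hpq.
  pose proof (EW eW); pose proof (EU (eq_sym eU)); pose proof (EV (eq_sym eV)).
  pose proof (UV_W p); pose proof (UV_W q); lra.
Qed.

Lemma split_non_down_edge (P : list point) (p q : point) :
  general_position P -> In p P -> In q P -> p <> q -> ~ G_down_adj P p q ->
  exists r, In r P /\ tri_size p r < tri_size p q /\ tri_size r q < tri_size p q.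
Proof.
  intros G Hp Hq Hpq ND.
  destruct (general_position_coords P p q G Hp Hq Hpq) as [Wpq _].
  assert (Inner : exists r, In r P /\ r <> p /\ r <> q /\ in_down_hull p q r).
  { apply NNPP; intro NE; apply ND.
    destruct (down_hull_is_triangle p q Wpq) as (x0 & y0 & h & Hh & Tri).
    split; [exact Hp | split; [exact Hq | split; [exact Hpq |]]].
    exists x0, y0, h; split; [exact Hh | split; [| split]].
    - apply Tri, in_down_hull_l.
    - apply Tri, in_down_hull_r.
    - intros r Hr Hin; apply Tri in Hin.
      destruct (classic (r = p)); [now left|]; destruct (classic (r = q)); [now right|].
      exfalso; apply NE; exists r; auto. }
  destruct Inner as [r [Hr [Hrp [Hrq Hull]]]].
  destruct (general_position_coords P r q G Hr Hq Hrq) as [Wrq [Urq Vrq]].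
  destruct (general_position_coords P r p G Hr Hp Hrp) as [Wrp [Urp Vrp]].
  exists r; split; [exact Hr | split].
  - now apply down_hull_smaller.
  - rewrite (tri_size_sym r q), (tri_size_sym p q).
    apply down_hull_smaller; auto; now apply in_down_hull_sym.
Qed.

(* The point reflection a |-> -a exchanges up- and down-triangles. *)
Definition reflect_pt (a : point) : point := (- fst a, - snd a).

Lemma reflect_involutive (a : point) : reflect_pt (reflect_pt a) = a.
Proof. destruct a as [x y]; unfold reflect_pt; simpl; now rewrite !Ropp_involutive. Qed.

Lemma reflect_inj (a b : point) : reflect_pt a = reflect_pt b -> a = b.
Proof. intro E; rewrite <- (reflect_involutive a), E; apply reflect_involutive. Qed.

Lemma in_map_reflect (P : list point) (a : point) :
  In (reflect_pt a) (map reflect_pt P) <-> In a P.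
Proof.
  rewrite in_map_iff; split.
  - intros [b [E Hb]]; now rewrite <- (reflect_inj _ _ E).
  - intro Ha; now exists a.
Qed.

Lemma up_triangle_reflect (x0 y0 h : R) (r : point) :
  in_up_triangle x0 y0 h r <-> in_down_triangle (- x0) (- y0) h (reflect_pt r).
Proof.
  unfold in_up_triangle, in_down_triangle, reflect_pt; simpl.
  replace (- fst r - - x0) with (- (fst r - x0)) by ring; rewrite Rabs_Ropp.
  split; intros [A B]; split; lra.
Qed.

Lemma general_position_reflect (P : list point) :
  general_position P -> general_position (map reflect_pt P).
Proof.
  intros G a b Ha Hb Hab.
  rewrite <- (reflect_involutive a) in Ha, Hab |- *.
  rewrite <- (reflect_involutive b) in Hb, Hab |- *.
  rewrite in_map_reflect in Ha, Hb.
  assert (Hne : reflect_pt a <> reflect_pt b) by (intro E; apply Hab; now rewrite E).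
  destruct (G _ _ Ha Hb Hne) as [A [B C]].
  unfold reflect_pt in *; simpl in *; repeat split; intro E; lra.
Qed.

(* The reflection preserves tri_size: the smallest down- and up-triangles
   containing two points have the same size. *)
Lemma tri_size_reflect (p q : point) :
  tri_size (reflect_pt p) (reflect_pt q) = tri_size p q.
Proof.
  pose proof (UV_W p); pose proof (UV_W q).
  unfold tri_size, W, U, V, reflect_pt in *; simpl.
  unfold Rmax, Rmin;
    repeat match goal with |- context [Rle_dec ?a ?b] => destruct (Rle_dec a b) end;
    lra.
Qed.

Lemma up_adj_of_reflect (P : list point) (p q : point) :
  G_down_adj (map reflect_pt P) (reflect_pt p) (reflect_pt q) -> G_up_adj P p q.
Proof.
  intros [Hp [Hq [Hpq (x0 & y0 & h & Hh & Tp & Tq & Only)]]].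
  rewrite in_map_reflect in Hp, Hq.
  split; [exact Hp | split; [exact Hq | split; [intro E; apply Hpq; now rewrite E |]]].
  exists (- x0), (- y0), h; rewrite !up_triangle_reflect, !Ropp_involutive.
  split; [exact Hh | split; [exact Tp | split; [exact Tq |]]].
  intros r Hr Hin; apply up_triangle_reflect in Hin; rewrite !Ropp_involutive in Hin.
  destruct (Only _ (proj2 (in_map_reflect P r) Hr) Hin) as [E|E];
    [left | right]; now apply reflect_inj.
Qed.

Lemma split_non_up_edge (P : list point) (p q : point) :
  general_position P -> In p P -> In q P -> p <> q -> ~ G_up_adj P p q ->
  exists r, In r P /\ tri_size p r < tri_size p q /\ tri_size r q < tri_size p q.
Proof.
  intros G Hp Hq Hpq NU.
  destruct (split_non_down_edge (map reflect_pt P) (reflect_pt p) (reflect_pt q))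
    as [r' [Hr' [L1 L2]]].
  - now apply general_position_reflect.
  - now apply in_map_reflect.
  - now apply in_map_reflect.
  - intro E; apply Hpq; now apply reflect_inj.
  - intro D; apply NU; now apply up_adj_of_reflect.
  - rewrite <- (reflect_involutive r') in Hr', L1, L2.
    rewrite in_map_reflect in Hr'; rewrite !tri_size_reflect in L1, L2.
    now exists (reflect_pt r').
Qed.

Section FiniteDescent.
Variables (A : Type) (f : A -> R).

Fixpoint count_below (L : list A) (x : R) : nat :=
  match L with
  | nil => 0
  | b :: L' => ((if Rlt_dec (f b) x then 1 else 0) + count_below L' x)%nat
  end.

Lemma count_below_mono (L : list A) (x y : R) :
  y <= x -> (count_below L y <= count_below L x)%nat.
Proof.
  intros H; induction L as [|b L IH]; simpl; [lia|].
  destruct (Rlt_dec (f b) y), (Rlt_dec (f b) x); lia || lra.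
Qed.

Lemma count_below_strict (L : list A) (b : A) (x : R) :
  f b < x -> In b L -> (count_below L (f b) < count_below L x)%nat.
Proof.
  intros H; induction L as [|c L IH]; simpl; [tauto|]; intros [->|Hb].
  - pose proof (count_below_mono L x (f b) (Rlt_le _ _ H)).
    destruct (Rlt_dec (f b) (f b)), (Rlt_dec (f b) x); lia || lra.
  - specialize (IH Hb).
    destruct (Rlt_dec (f c) (f b)), (Rlt_dec (f c) x); lia || lra.
Qed.

Lemma finite_descent (L : list A) (Q : A -> Prop) :
  (forall a, In a L -> (forall b, In b L -> f b < f a -> Q b) -> Q a) ->
  forall a, In a L -> Q a.
Proof.
  intros Step.
  assert (H : forall n a, count_below L (f a) = n -> In a L -> Q a).
  { intro n; induction n as [n IH] using lt_wf_ind; intros a En Ha.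
    apply Step; [exact Ha|]; intros b Hb Hlt.
    apply (IH (count_below L (f b))); auto.
    subst n; now apply count_below_strict. }
  intro a; exact (H _ a eq_refl).
Qed.

End FiniteDescent.

Theorem lemma8 (P : list point) :
  NoDup P -> general_position P -> graph_connected P (G_cap_adj P).
Proof.
  intros _ G p q Hp Hq.
  pose (Q := fun pq : point * point =>
               clos_refl_trans point (G_cap_adj P) (fst pq) (snd pq)).
  change (Q (p, q)).
  apply (finite_descent _ (fun pq => tri_size (fst pq) (snd pq)) (list_prod P P) Q);
    [| now apply in_prod].
  intros [a b] Hab IH; apply in_prod_iff in Hab as [Ha Hb]; unfold Q; simpl in *.
  destruct (classic (a = b)) as [<-|Hne]; [apply rt_refl|].
  destruct (classic (G_cap_adj P a b)) as [E|NE]; [now apply rt_step|].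
  assert (Split : exists r, In r P /\ tri_size a r < tri_size a b /\
                              tri_size r b < tri_size a b).
  { destruct (classic (G_down_adj P a b)) as [D|D].
    - apply split_non_up_edge; auto; intro Up; now apply NE.
    - now apply split_non_down_edge. }
  destruct Split as [r [Hr [Lar Lrb]]].
  apply rt_trans with r; [apply (IH (a, r)) | apply (IH (r, b))];
    simpl; auto; now apply in_prod.
Qed.
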